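(* A closed reversible reaction network $(X,\mathscr{R})$ is free of cornucopias and abysses if and only if it is conservative.
   Context: A reaction network (RN) $(X,\mathscr{R})$ consists of a finite non-empty set $X$ of species and a finite non-empty set $\mathscr{R}$ of reactions. Each reaction $r$ is given by stoichiometric coefficients $s^-_{xr},s^+_{xr}\in\mathbb{N}_0$. The stoichiometric matrix $S\in\mathbb{Z}^{X\times\mathscr{R}}$ has entries $S_{xr}=s^+_{xr}-s^-_{xr}$. The RN is closed if every reaction $r$ has some $x$ with $S_{xr}<0$ and some $y$ with $S_{yr}>0$. The reverse $\bar r$ of $r$ has $s^-_{x\bar r}=s^+_{xr}$ and $s^+_{x\bar r}=s^-_{xr}$. The RN is reversible if $r\in\mathscr{R}$ implies $\bar r\in\mathscr{R}$. For a real vector $w$: - $w>0$ means $w$ is componentwise non-negative and nonzero; - $w<0$ means $-w>0$; - $w\gg0$ means all entries are positive. A flow $v\in\mathbb{R}^{\mathscr{R}}$ with $v>0$ is a cornucopia if $Sv>0$, and an abyss if $Sv<0$. The RN is conservative if there is $m\in\mathbb{R}^X$ with $m\gg0$ and $m^\top S=0$. *)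

From mathcomp Require Import all_boot all_order all_algebra.
From mathcomp Require Import reals.
Set Implicit Arguments. Unset Strict Implicit. Unset Printing Implicit Defensive.
Import Order.TTheory GRing.Theory Num.Theory.
Local Open Scope ring_scope.

(* A reaction network: species indexed by a finType X, reactions by a finType
   Rn; reaction r has reactant coefficients sm r x and product coefficients
   sp r x (natural numbers). *)
Record RN (X Rn : finType) := MkRN {
  sm : Rn -> X -> nat;
  sp : Rn -> X -> nat }.

(* Distinct reaction indices denote distinct reactions (R is a set). *)
Definition RN_simple (X Rn : finType) (N : RN X Rn) : Prop :=
  forall r r', (forall x, sm N r x = sm N r' x) ->
               (forall x, sp N r x = sp N r' x) -> r = r'.

Definition stoich (R : numDomainType) (X Rn : finType) (N : RN X Rn)
  : 'M[R]_(#|X|, #|Rn|) :=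
  \matrix_(i, j) ((sp N (enum_val j) (enum_val i))%:R
                  - (sm N (enum_val j) (enum_val i))%:R).

Definition closed_RN (X Rn : finType) (N : RN X Rn) : Prop :=
  forall r : Rn, (exists x, (sp N r x < sm N r x)%N) /\
                 (exists y, (sm N r y < sp N r y)%N).

Definition reversible (X Rn : finType) (N : RN X Rn) : Prop :=
  forall r : Rn, exists r' : Rn,
    (forall x, sm N r' x = sp N r x) /\ (forall x, sp N r' x = sm N r x).

Definition semipos (R : numDomainType) m n (w : 'M[R]_(m, n)) : Prop :=
  (forall i j, 0 <= w i j) /\ w != 0.
Definition strictpos (R : numDomainType) m n (w : 'M[R]_(m, n)) : Prop :=
  forall i j, 0 < w i j.

Definition cornucopia (R : numDomainType) (X Rn : finType) (N : RN X Rn)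
  (v : 'cV[R]_#|Rn|) : Prop :=
  semipos v /\ semipos (stoich R N *m v).
Definition abyss (R : numDomainType) (X Rn : finType) (N : RN X Rn)
  (v : 'cV[R]_#|Rn|) : Prop :=
  semipos v /\ semipos (- (stoich R N *m v)).

Definition conservative (R : numDomainType) (X Rn : finType) (N : RN X Rn)
  : Prop :=
  exists m : 'cV[R]_#|X|, strictpos m /\ m^T *m stoich R N = 0.

From mathcomp Require Import all_boot all_order all_algebra.
From mathcomp Require Import reals boolp.
Set Implicit Arguments. Unset Strict Implicit. Unset Printing Implicit Defensive.
Import Order.TTheory GRing.Theory Num.Theory.
Local Open Scope ring_scope.

(* If m >> 0 and m^T S = 0, then m^T (S v) = 0 while m^T w > 0 for every
   w > 0, so S v is never > 0 or < 0.  Conversely, by reversibility every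
   vector S x is also S v for some flow v >= 0 (push the negative part of x
   through the reverse reactions), so without cornucopias S x >= 0 forces
   S x = 0.  Farkas' lemma then writes each -row_i S as a nonnegative
   combination sum_j l_ij row_j S, and m_j = 1 + sum_i l_ij is a strictly
   positive conservation law (Stiemke's theorem). *)

Section Farkas.
Variables (R : realFieldType) (k : nat).

Definition dot (a : 'rV[R]_k) (x : 'cV[R]_k) : R := (a *m x) 0 0.

Definition in_cone m (a : 'I_m -> 'rV[R]_k) (b : 'rV[R]_k) : Prop :=
  exists l : 'I_m -> R, (forall i, 0 <= l i) /\ b = \sum_i l i *: a i.

Lemma dotBl a b x : dot (a - b) x = dot a x - dot b x.
Proof. by rewrite /dot mulmxBl !mxE. Qed.

Lemma dotZl c a x : dot (c *: a) x = c * dot a x.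
Proof. by rewrite /dot -scalemxAl !mxE. Qed.

Lemma dotBr a x y : dot a (x - y) = dot a x - dot a y.
Proof. by rewrite /dot mulmxBr !mxE. Qed.

Lemma dotZr c a x : dot a (c *: x) = c * dot a x.
Proof. by rewrite /dot -scalemxAr !mxE. Qed.

Lemma dotNr a x : dot a (- x) = - dot a x.
Proof. by rewrite /dot mulmxN !mxE. Qed.

Lemma dot_delta b j : dot b (delta_mx j 0) = b 0 j.
Proof. by rewrite /dot -colE mxE. Qed.

Lemma dot_ge0_eq0 b : (forall x, 0 <= dot b x) -> b = 0.
Proof.
move=> b_ge0; apply/rowP => j; rewrite mxE; apply/eqP; rewrite eq_le.
have := b_ge0 (- delta_mx j 0); rewrite dotNr dot_delta oppr_ge0 => ->.
by rewrite -dot_delta b_ge0.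
Qed.

Lemma in_cone_cons m (a : 'I_m.+1 -> 'rV[R]_k) b c :
  0 <= c -> in_cone (fun i => a (lift ord0 i)) (b - c *: a ord0) ->
  in_cone a b.
Proof.
move=> c_ge0 [l [l_ge0 Eb]].
exists (fun i => if unlift ord0 i is Some j then l j else c); split.
  by move=> i; case: (unlift ord0 i).
rewrite big_ord_recl unlift_none addrC -[b](subrK (c *: a ord0)) Eb.
by congr (_ + _); apply: eq_bigr => i _; rewrite liftK.
Qed.

Section Elimination.
Variables (a0 : 'rV[R]_k) (z : 'cV[R]_k).

(* Fourier-Motzkin elimination of a0 along z: testing fm_elim u against x
   amounts to testing u against a point of the hyperplane dot a0 _ = 0. *)
Definition fm_elim (u : 'rV[R]_k) : 'rV[R]_k := u - (dot u z / dot a0 z) *: a0.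

Lemma dot_fm_elim u x :
  dot (fm_elim u) x = dot u (x - (dot a0 x / dot a0 z) *: z).
Proof.
by rewrite dotBl dotZl dotBr dotZr mulrAC [in RHS]mulrAC (mulrC (dot u z)).
Qed.

Lemma dot_a0_fm_shift x :
  dot a0 z != 0 -> dot a0 (x - (dot a0 x / dot a0 z) *: z) = 0.
Proof. by move=> a0z; rewrite dotBr dotZr mulfVK // subrr. Qed.

Lemma fm_elim_dual m (a : 'I_m -> 'rV[R]_k) b :
  dot a0 z != 0 ->
  (forall x, 0 <= dot a0 x -> (forall i, 0 <= dot (a i) x) -> 0 <= dot b x) ->
  forall x, (forall i, 0 <= dot (fm_elim (a i)) x) -> 0 <= dot (fm_elim b) x.
Proof.
move=> a0z dual x elim_ge0; rewrite dot_fm_elim.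
by apply: dual => [|i]; rewrite ?dot_a0_fm_shift // -dot_fm_elim.
Qed.

Lemma in_cone_fm_elim m (a : 'I_m -> 'rV[R]_k) b :
  dot a0 z < 0 -> dot b z < 0 -> (forall i, 0 <= dot (a i) z) ->
  in_cone (fun i => fm_elim (a i)) (fm_elim b) ->
  exists2 c, 0 <= c & in_cone a (b - c *: a0).
Proof.
move=> a0z bz az [l [l_ge0 Eb]].
set f := fun u => dot u z / dot a0 z.
exists (f b - \sum_i l i * f (a i)).
  rewrite subr_ge0 (@le_trans _ _ 0) //.
    apply: sumr_le0 => i _; rewrite mulr_ge0_le0 // mulr_ge0_le0 //.
    by rewrite invr_le0 ltW.
  by rewrite /f ltW // -mulrNN mulr_gt0 // oppr_gt0 ?invr_lt0.
exists l; split => //; rewrite scalerBl opprB addrCA.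
move: Eb; rewrite /fm_elim -/(f b) => ->.
under [X in _ + X]eq_bigr => i _ do rewrite scalerBr scalerA.
by rewrite sumrB -scaler_suml addrC subrK.
Qed.

End Elimination.

Lemma farkas m (a : 'I_m -> 'rV[R]_k) b :
  (forall x, (forall i, 0 <= dot (a i) x) -> 0 <= dot b x) -> in_cone a b.
Proof.
elim: m a b => [|m IH] a b dual.
  exists (fun _ => 0); split => //; rewrite big_ord0.
  by apply: dot_ge0_eq0 => x; apply: dual; case.
set a0 := a ord0; set a' := fun i => a (lift ord0 i).
have dual' x : 0 <= dot a0 x -> (forall i, 0 <= dot (a' i) x) -> 0 <= dot b x.
  move=> a0x a'x; apply: dual => i.
  by case: (unliftP ord0 i) => [j ->|->]; [apply: a'x | apply: a0x].
have [dual_a'|] := pselect (forall x, (forall i, 0 <= dot (a' i) x) -> 0 <= dot b x).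
  by apply: (in_cone_cons (c := 0)) => //; rewrite scale0r subr0; apply: IH.
move=> /existsNP[z /not_implyP[a'z /negP]]; rewrite -ltNge => bz.
have a0z : dot a0 z < 0.
  by rewrite ltNge; apply/negP => a0z; move: bz; rewrite ltNge dual'.
have [|c c_ge0] := in_cone_fm_elim a0z bz a'z.
  by apply/IH/fm_elim_dual => //; rewrite lt_eqF.
exact: in_cone_cons.
Qed.

End Farkas.

Section Stiemke.
Variables (R : realFieldType) (p q : nat).

Lemma mulmx_sum_col (A : 'M[R]_(p, q)) (x : 'cV[R]_q) :
  A *m x = \sum_j x j 0 *: col j A.
Proof.
rewrite {1}(matrix_sum_delta x) mulmx_sumr; apply: eq_bigr => j _.
by rewrite big_ord1 -scalemxAr colE.
Qed.

Lemma dot_row (A : 'M[R]_(p, q)) i x : dot (row i A) x = (A *m x) i 0.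
Proof. by rewrite /dot -row_mul mxE. Qed.

Lemma strictpos_semipos_gt0 (m w : 'cV[R]_p) :
  strictpos m -> semipos w -> 0 < (m^T *m w) 0 0.
Proof.
move=> m_gt0 [w_ge0 w_neq0].
have [i wi_neq0] : exists i, w i 0 != 0.
  apply: contrapT => /forallNP w_eq0; move/negP: w_neq0; apply.
  by apply/eqP/colP => i; rewrite mxE; apply/eqP/negPn/negP/w_eq0.
rewrite mxE (bigD1 i) //= mxE ltr_wpDr //.
  by apply: sumr_ge0 => j _; rewrite mxE mulr_ge0 // ltW.
by rewrite mulr_gt0 // lt_def wi_neq0 w_ge0.
Qed.

Lemma stiemke (A : 'M[R]_(p, q)) :
  (exists m : 'cV[R]_p, strictpos m /\ m^T *m A = 0) <->
  (forall x : 'cV[R]_q, ~ semipos (A *m x)).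
Proof.
split=> [[m [m_gt0 mA]] x /(strictpos_semipos_gt0 m_gt0)|no_semipos].
  by rewrite mulmxA mA mul0mx mxE ltxx.
have cone (i : 'I_p) : in_cone (fun j => row j A) (- row i A).
  apply: farkas => x Ax_ge0.
  have Ax0 : A *m x = 0.
    apply: contrapT => Ax_neq0; apply: (no_semipos x); split; last exact/eqP.
    by move=> j j'; rewrite ord1 -dot_row.
  by rewrite /dot mulNmx mxE -/(dot _ _) dot_row Ax0 mxE oppr0.
have [L L_cone] := choice cone.
exists (\col_j (1 + \sum_i L i j)); split.
  move=> j j'; rewrite mxE ltr_wpDr // sumr_ge0 // => i _.
  by case: (L_cone i) => + _; apply.
rewrite mulmx_sum_row.
under eq_bigr do rewrite !mxE scalerDl scale1r scaler_suml.
rewrite big_split /= exchange_big /=.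
under [X in _ + X]eq_bigr => i _ do rewrite -(proj2 (L_cone i)).
by rewrite sumrN subrr.
Qed.

End Stiemke.

Lemma maxr0_sub_maxNr0 (R : realDomainType) (x : R) :
  Num.max x 0 - Num.max (- x) 0 = x.
Proof.
case: (ger0P x) => [x_ge0|x_lt0].
  by rewrite max_r ?subr0 // oppr_le0.
by rewrite max_l ?sub0r ?opprK // oppr_ge0 ltW.
Qed.

Section ReversibleNetwork.
Variables (R : realFieldType) (X Rn : finType) (N : RN X Rn).
Local Notation S := (stoich R N).

Lemma stoich_col_reverse r r' :
  (forall x, sm N r' x = sp N r x) -> (forall x, sp N r' x = sm N r x) ->
  col (enum_rank r') S = - col (enum_rank r) S.
Proof. by move=> Em Ep; apply/colP => i; rewrite !mxE !enum_rankK Em Ep opprB. Qed.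

Lemma reversible_nonneg_flow : reversible N ->
  forall x : 'cV[R]_#|Rn|,
  exists2 v : 'cV[R]_#|Rn|, (forall j, 0 <= v j 0) & S *m v = S *m x.
Proof.
move=> /choice[rev rev_spec] x.
pose rev_col (j : 'I_#|Rn|) := enum_rank (rev (enum_val j)).
have S_rev j : col (rev_col j) S = - col j S.
  case: (rev_spec (enum_val j)) => Em Ep.
  by rewrite (stoich_col_reverse Em Ep) enum_valK.
exists (\sum_j (Num.max (x j 0) 0 *: delta_mx j 0
              + Num.max (- x j 0) 0 *: delta_mx (rev_col j) 0)).
  move=> j; rewrite summxE sumr_ge0 // => i _.
  by rewrite !mxE addr_ge0 // mulr_ge0 ?le_max ?lexx ?orbT.
rewrite [RHS]mulmx_sum_col mulmx_sumr; apply: eq_bigr => j _.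
by rewrite mulmxDr -!scalemxAr -!colE S_rev scalerN -scalerBl maxr0_sub_maxNr0.
Qed.

Lemma reversible_no_cornucopia : reversible N ->
  (forall v : 'cV[R]_#|Rn|, ~ cornucopia N v) ->
  forall x : 'cV[R]_#|Rn|, ~ semipos (S *m x).
Proof.
move=> rev no_cc x [Sx_ge0 Sx_neq0].
have [v v_ge0 Sv] := reversible_nonneg_flow rev x.
apply: (no_cc v); split; last by rewrite Sv.
split=> [j j'|]; first by rewrite ord1.
by apply: contraNneq Sx_neq0 => v0; rewrite -Sv v0 mulmx0.
Qed.

End ReversibleNetwork.

Theorem theorem4 (R : realType) (X Rn : finType) (N : RN X Rn) :
  (0 < #|X|)%N -> (0 < #|Rn|)%N -> RN_simple N ->
  closed_RN N -> reversible N ->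
  ((forall v : 'cV[R]_#|Rn|, ~ cornucopia N v /\ ~ abyss N v)
   <-> conservative R N).
Proof.
move=> _ _ _ _ rev; split=> [no_cc_ab | /stiemke no_semipos v].
  by apply/stiemke/reversible_no_cornucopia => // v; case: (no_cc_ab v).
split=> [[_ /no_semipos] | [_]] //.
by rewrite -mulmxN => /no_semipos.
Qed.
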